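(* Let $f:\mathbb{N}\to[0,\infty)$ be weakly super-multiplicative with normal order $g:(0,\infty)\to(0,\infty)$, where $g$ is either non-decreasing or $\log$-uniformly continuous. Then the limit $\lim_{y\to\infty}\frac{\log g(y)}{\log y}$ (over real $y$) exists in $\mathbb{R}\cup\{\infty\}$ and equals $\sup_{n\ge2}\frac{\log f(n)}{\log n}$ (with the convention $\log 0=-\infty$).
   Context: A function $f:\mathbb{N}\to[0,\infty)$ is weakly super-multiplicative if for all $n\in\mathbb{N}$ and all $\epsilon>0$ there exist $x_0>0$ and $\delta>0$ such that for all real $x>x_0$, $\#\{m\in\mathbb{N}\cap[x,(1+\epsilon)x]: f(nm)\ge(1-\epsilon)f(n)f(m)\}\ge\delta x$. A function $f:\mathbb{N}\to[0,\infty)$ has normal order $g$ if for every $\epsilon>0$ the set $\{n\in\mathbb{N}: |f(n)-g(n)|\ge\epsilon g(n)\}$ has upper (natural) density $0$. A function $g:(0,\infty)\to(0,\infty)$ is $\log$-uniformly continuous if for every $\epsilon>0$ there is $\delta>0$ such that for all $x,y>0$ with $|x/y-1|<\delta$ we have $|g(x)/g(y)-1|<\epsilon$. *)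

From Stdlib Require Import Reals Lra Lia ClassicalEpsilon.
Open Scope R_scope.

Fixpoint count_le (P : nat -> Prop) (N : nat) : nat :=
  match N with
  | O => if excluded_middle_informative (P O) then 1%nat else 0%nat
  | S k => (count_le P k + if excluded_middle_informative (P (S k)) then 1 else 0)%nat
  end.

(* #{ m in N ∩ [a,b] | P m }, for b >= 0 (all such m are <= up b) *)
Definition count_interval (a b : R) (P : nat -> Prop) : nat :=
  count_le (fun m => a <= INR m <= b /\ P m) (Z.to_nat (up b)).

Definition weakly_supermult (f : nat -> R) : Prop :=
  forall n : nat, (1 <= n)%nat -> forall eps : R, 0 < eps ->
  exists x0 delta : R, 0 < x0 /\ 0 < delta /\
    forall x : R, x > x0 ->
      INR (count_interval x ((1 + eps) * x)
             (fun m => (1 <= m)%nat /\ f (n * m)%nat >= (1 - eps) * f n * f m))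
      >= delta * x.

Definition upper_density_zero (A : nat -> Prop) : Prop :=
  forall eta : R, 0 < eta -> exists N0 : nat, forall N : nat, (N >= N0)%nat ->
    INR (count_le (fun n => (1 <= n)%nat /\ A n) N) <= eta * INR N.

Definition normal_order (f : nat -> R) (g : R -> R) : Prop :=
  forall eps : R, 0 < eps ->
    upper_density_zero (fun n => Rabs (f n - g (INR n)) >= eps * g (INR n)).

Definition nondecreasing_pos (g : R -> R) : Prop :=
  forall x y : R, 0 < x -> x <= y -> g x <= g y.

Definition log_unif_cont (g : R -> R) : Prop :=
  forall eps : R, 0 < eps -> exists delta : R, 0 < delta /\
    forall x y : R, 0 < x -> 0 < y -> Rabs (x / y - 1) < delta ->
      Rabs (g x / g y - 1) < eps.

(* The values log f(n)/log n, n >= 2, with log 0 = -infinity: terms with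
   f n = 0 equal -infinity and are omitted (they never affect the sup
   unless all terms are -infinity, in which case the set is empty). *)
Definition ratio_set (f : nat -> R) (r : R) : Prop :=
  exists n : nat, (2 <= n)%nat /\ 0 < f n /\ r = ln (f n) / ln (INR n).

Definition tends_to_at_infty (h : R -> R) (L : R) : Prop :=
  forall e : R, 0 < e -> exists Y : R, forall y : R, y > Y -> Rabs (h y - L) < e.

Definition tends_to_infty (h : R -> R) : Prop :=
  forall M : R, exists Y : R, forall y : R, y > Y -> h y > M.

From Stdlib Require Import Reals Lra Lia ZArith ClassicalEpsilon Classical.
Open Scope R_scope.

(* For a typical integer m in [y, 2y], f(m) and g(m) agree up to a constant
   factor and the regularity of g compares g(m) with g(y); hence
   ln g(y) <= (sup + o(1)) ln y.  Conversely, fix n with f(n) > 0.  Weak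
   super-multiplicativity provides a positive proportion of m in [y, (1+eps)y]
   with f(nm) >~ f(n) f(m), and since f ~ g off a set of density zero, some such
   m also has f ~ g at m and at nm.  With the regularity of g this gives
   g((1+eps) n y) >~ f(n) g(y) for all large y; iterating along the geometric
   progression ((1+eps) n)^k y yields ln g(z) >= (ln f(n) / ln n - o(1)) ln z. *)

Lemma count_le_mono (P Q : nat -> Prop) (N : nat) :
  (forall m, P m -> Q m) -> (count_le P N <= count_le Q N)%nat.
Proof.
  intros H; induction N as [|N IH]; simpl;
    repeat destruct excluded_middle_informative; try lia; exfalso; eauto.
Qed.

Lemma count_le_or (P Q : nat -> Prop) (N : nat) :
  (count_le (fun m => P m \/ Q m) N <= count_le P N + count_le Q N)%nat.
Proof.
  induction N as [|N IH]; simpl;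
    repeat destruct excluded_middle_informative; try lia; exfalso; intuition.
Qed.

Lemma count_le_monotone (P : nat -> Prop) (a b : nat) :
  (a <= b)%nat -> (count_le P a <= count_le P b)%nat.
Proof. induction 1; simpl; lia. Qed.

Lemma count_le_dilate (Q : nat -> Prop) (n N : nat) : (1 <= n)%nat ->
  (count_le (fun m => Q (n * m)%nat) N <= count_le Q (n * N))%nat.
Proof.
  intros Hn; induction N as [|N IH].
  - rewrite Nat.mul_0_r; simpl; rewrite Nat.mul_0_r; lia.
  - cbn [count_le].
    replace (n * S N)%nat with (S (n * N + pred n)) by lia.
    cbn [count_le].
    pose proof (count_le_monotone Q (n * N) (n * N + pred n) ltac:(lia)).
    lia.
Qed.

Lemma count_le_or_dilate_bound (C : nat -> Prop) (n N : nat) (theta : R) :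
  (1 <= n)%nat ->
  INR (count_le C N) <= theta * INR N ->
  INR (count_le C (n * N)) <= theta * INR (n * N) ->
  INR (count_le (fun m => C m \/ C (n * m)%nat) N) <= theta * (1 + INR n) * INR N.
Proof.
  intros Hn HN HnN.
  pose proof (count_le_or C (fun m => C (n * m)%nat) N) as Hor.
  pose proof (count_le_dilate C n N Hn) as Hdil.
  apply le_INR in Hor, Hdil; rewrite plus_INR in Hor; rewrite mult_INR in HnN.
  lra.
Qed.

Lemma count_le_lt_exists (P Q : nat -> Prop) (N : nat) :
  (count_le Q N < count_le P N)%nat -> exists m, P m /\ ~ Q m.
Proof.
  intros H; apply NNPP; intros Hno.
  assert (count_le P N <= count_le Q N)%nat.
  { apply count_le_mono; intros m Pm; apply NNPP; eauto. }
  lia.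
Qed.

Lemma INR_up_to_nat (b : R) : 0 < b -> b < INR (Z.to_nat (up b)) <= b + 1.
Proof.
  intros Hb; destruct (archimed b) as [H1 H2].
  assert (Hp : (0 <= up b)%Z) by (apply le_IZR; lra).
  rewrite INR_IZR_INZ, Z2Nat.id by exact Hp; lra.
Qed.

(* Among the multipliers granted by weak super-multiplicativity (a set of
   positive lower density in [x, (1+eps)x]) some m escapes the density-zero
   sets where f(m) or f(nm) is far from g. *)
Lemma exists_good_multiplier (f : nat -> R) (g : R -> R)
  (hf_wsm : weakly_supermult f) (hfg : normal_order f g) (n : nat) (eps eta : R) :
  (1 <= n)%nat -> 0 < eps -> 0 < eta ->
  exists X, forall x, x > X -> exists m : nat, (1 <= m)%nat /\
    x <= INR m <= (1 + eps) * x /\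
    (1 - eps) * f n * f m <= f (n * m)%nat /\
    Rabs (f m - g (INR m)) < eta * g (INR m) /\
    Rabs (f (n * m)%nat - g (INR (n * m))) < eta * g (INR (n * m)).
Proof.
  intros Hn Heps Heta.
  destruct (hf_wsm n Hn eps Heps) as [x0 [delta [_ [Hdelta Hcount]]]].
  set (Bad := fun k : nat =>
    (1 <= k)%nat /\ Rabs (f k - g (INR k)) >= eta * g (INR k)).
  assert (HnR : 1 <= INR n) by exact (le_INR 1 n Hn).
  set (theta := delta / (2 * (1 + INR n) * (2 + eps))).
  assert (Htheta : theta * ((1 + INR n) * (2 + eps)) = delta / 2)
    by (unfold theta; field; lra).
  assert (Htheta0 : 0 < theta)
    by (apply Rdiv_lt_0_compat; [lra | apply Rmult_lt_0_compat; lra]).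
  destruct (hfg eta Heta theta Htheta0) as [N0 HN0].
  exists (Rmax x0 (Rmax 1 (INR N0))); intros x Hx.
  assert (Hx0 : x > x0) by (eapply Rle_lt_trans; [apply Rmax_l | exact Hx]).
  assert (Hx1 : 1 < x)
    by (eapply Rle_lt_trans; [| exact Hx]; eapply Rle_trans; [| apply Rmax_r]; apply Rmax_l).
  assert (HxN0 : INR N0 < x)
    by (eapply Rle_lt_trans; [| exact Hx]; eapply Rle_trans; [| apply Rmax_r]; apply Rmax_r).
  specialize (Hcount x Hx0); unfold count_interval in Hcount.
  set (N := Z.to_nat (up ((1 + eps) * x))) in Hcount.
  set (Multiplier := fun m : nat => x <= INR m <= (1 + eps) * x /\
    (1 <= m)%nat /\ f (n * m)%nat >= (1 - eps) * f n * f m) in Hcount.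
  assert (HN : (1 + eps) * x < INR N <= (1 + eps) * x + 1)
    by (apply INR_up_to_nat; nra).
  assert (HNN0 : (N0 <= N)%nat) by (apply INR_le; nra).
  assert (Hbad : INR (count_le (fun m => Bad m \/ Bad (n * m)%nat) N) <= delta / 2 * x).
  { pose proof (count_le_or_dilate_bound Bad n N theta Hn (HN0 N HNN0)
      (HN0 (n * N)%nat ltac:(nia))) as Hcnt.
    assert (theta * (1 + INR n) * INR N <= theta * (1 + INR n) * ((2 + eps) * x))
      by (apply Rmult_le_compat_l; nra).
    nra. }
  destruct (count_le_lt_exists Multiplier (fun m => Bad m \/ Bad (n * m)%nat) N)
    as [m [[Hm [Hm1 Hsup]] Hgood]].
  { apply INR_lt; eapply Rle_lt_trans; [exact Hbad |]; nra. }
  exists m; repeat split; try tauto; try lra;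
    apply Rnot_ge_lt; intros Hge; apply Hgood; [left | right]; split; auto; nia.
Qed.

Definition almost_nondecreasing (g : R -> R) (tau eps : R) : Prop :=
  forall x z, 0 < x -> x <= z <= (1 + eps) * x -> (1 - tau) * g x <= g z.

Lemma almost_nondecreasing_le (g : R -> R) (tau eps eps' : R) :
  eps' <= eps -> almost_nondecreasing g tau eps -> almost_nondecreasing g tau eps'.
Proof. intros Hle H x z Hx Hz; apply H; nra. Qed.

Lemma nondecreasing_almost_nondecreasing (g : R -> R) (tau eps : R) :
  (forall x, 0 < x -> 0 < g x) -> nondecreasing_pos g -> 0 <= tau ->
  almost_nondecreasing g tau eps.
Proof.
  intros Hpos Hnd Htau x z Hx Hz.
  pose proof (Hpos x Hx); pose proof (Hnd x z Hx (proj1 Hz)); nra.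
Qed.

Lemma log_unif_cont_almost_nondecreasing (g : R -> R) (tau : R) :
  (forall x, 0 < x -> 0 < g x) -> log_unif_cont g -> 0 < tau ->
  exists e0, 0 < e0 /\ almost_nondecreasing g tau e0.
Proof.
  intros Hpos Hlu Htau; destruct (Hlu tau Htau) as [d [Hd Hcont]].
  exists (d / 2); split; [lra |]; intros x z Hx Hz.
  assert (Hz0 : 0 < z) by lra.
  set (q := z / x); assert (Hq : z = q * x) by (unfold q; field; lra).
  assert (Hq1 : 1 <= q <= 1 + d / 2) by (split; nra).
  assert (Hzx : Rabs (z / x - 1) < d) by (fold q; apply Rabs_def1; lra).
  destruct (Rabs_def2 _ _ (Hcont z x Hz0 Hx Hzx)) as [_ Hr].
  pose proof (Hpos x Hx) as Hgx.
  set (r := g z / g x) in Hr; assert (Hgz : g z = r * g x) by (unfold r; field; lra).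
  nra.
Qed.

Lemma regular_almost_nondecreasing (g : R -> R) (tau : R) :
  (forall x, 0 < x -> 0 < g x) -> nondecreasing_pos g \/ log_unif_cont g -> 0 < tau ->
  exists e0, 0 < e0 /\ almost_nondecreasing g tau e0.
Proof.
  intros Hpos [Hnd | Hlu] Htau.
  - exists 1; split; [lra |]; apply nondecreasing_almost_nondecreasing; auto; lra.
  - exact (log_unif_cont_almost_nondecreasing g tau Hpos Hlu Htau).
Qed.

Lemma ln_le (x y : R) : 0 < x -> x <= y -> ln x <= ln y.
Proof. intros Hx [Hlt | ->]; [left; apply ln_increasing | right]; auto. Qed.

Lemma exists_pow_ge (r b : R) : 1 < r -> exists N : nat, b <= r ^ N.
Proof.
  intros Hr; destruct (Pow_x_infinity r ltac:(rewrite Rabs_right; lra) b) as [N HN].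
  exists N; specialize (HN N (Nat.le_refl N)).
  rewrite Rabs_right in HN by (left; apply pow_lt; lra); lra.
Qed.

Lemma almost_nondecreasing_lower_bound (g : R -> R) (tau eps Y rho : R) :
  (forall x, 0 < x -> 0 < g x) -> 0 <= tau < 1 -> 0 < eps -> 0 < Y ->
  almost_nondecreasing g tau eps ->
  exists a, 0 < a /\ forall y, Y <= y <= rho * Y -> a <= g y.
Proof.
  intros Hpos Htau Heps HY Hg.
  assert (Hchain : forall (j : nat) z, Y <= z <= (1 + eps) ^ j * Y ->
    (1 - tau) ^ j * g Y <= g z).
  { induction j as [|j IH]; intros z Hz.
    - simpl in *; replace z with Y by lra; lra.
    - set (x := Rmax Y (z / (1 + eps))).
      assert (Hzx : z = (1 + eps) * (z / (1 + eps))) by (field; lra).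
      assert (HYx : Y <= x) by apply Rmax_l.
      assert (Hxz : x <= z <= (1 + eps) * x).
      { split; [apply Rmax_lub; nra |].
        pose proof (Rmax_r Y (z / (1 + eps))) as Hx; fold x in Hx; nra. }
      assert (Hxj : x <= (1 + eps) ^ j * Y).
      { apply Rmax_lub.
        - pose proof (pow_R1_Rle (1 + eps) j ltac:(lra)); nra.
        - simpl in Hz; nra. }
      pose proof (IH x (conj HYx Hxj)); pose proof (Hg x z ltac:(lra) Hxz).
      simpl; nra. }
  destruct (exists_pow_ge (1 + eps) rho ltac:(lra)) as [J HJ].
  exists ((1 - tau) ^ J * g Y); split.
  - apply Rmult_lt_0_compat; [apply pow_lt; lra | apply Hpos; lra].
  - intros y Hy; apply Hchain; nra.
Qed.

Lemma geometric_cover (rho Y z : R) : 1 < rho -> 0 < Y -> Y <= z ->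
  exists k : nat, rho ^ k * Y <= z <= rho ^ S k * Y.
Proof.
  intros Hrho HY Hz; destruct (exists_pow_ge rho (z / Y) Hrho) as [N HN].
  assert (HzN : z <= rho ^ N * Y).
  { replace z with (z / Y * Y) by (field; lra); nra. }
  clear HN; induction N as [|N IH].
  - exists 0%nat; simpl in *; nra.
  - destruct (Rle_dec z (rho ^ N * Y)) as [Hle | Hgt]; [apply IH; exact Hle |].
    exists N; lra.
Qed.

Section GeometricGrowth.
Variables (g : R -> R) (rho c Y a : R).
Hypotheses (Hrho : 1 < rho) (HY : 0 < Y).
Hypothesis Hstep : forall y, Y <= y -> c * g y <= g (rho * y).
Hypothesis Hbase : forall y, Y <= y <= rho * Y -> a <= g y.

Lemma geometric_growth_pow (Hc : 0 <= c) :
  forall (k : nat) z, rho ^ k * Y <= z <= rho ^ S k * Y -> c ^ k * a <= g z.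
Proof.
  induction k as [|k IH]; intros z Hz.
  - simpl in *; rewrite Rmult_1_l; apply Hbase; lra.
  - set (w := z / rho); assert (Hw : z = rho * w) by (unfold w; field; lra).
    assert (Hpk : 1 <= rho ^ k) by (apply pow_R1_Rle; lra).
    assert (Hwk : rho ^ k * Y <= w <= rho ^ S k * Y) by (simpl in *; nra).
    pose proof (IH w Hwk); pose proof (Hstep w ltac:(nra)).
    rewrite Hw; simpl; nra.
Qed.

Lemma ln_ge_of_geometric_growth (Hc : 0 < c) (Ha : 0 < a) :
  exists C, forall z, Y <= z -> ln c / ln rho * ln z - C <= ln (g z).
Proof.
  assert (Hlr : 0 < ln rho) by (rewrite <- ln_1; apply ln_increasing; lra).
  set (lam := ln c / ln rho).
  exists (Rabs lam * (ln rho + Rabs (ln Y)) - ln a); intros z Hz.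
  destruct (geometric_cover rho Y z Hrho HY Hz) as [k Hk].
  assert (Hck : 0 < c ^ k) by (apply pow_lt; lra).
  assert (Hpk : 0 < rho ^ k) by (apply pow_lt; lra).
  assert (Hlg : ln (c ^ k * a) <= ln (g z))
    by (apply ln_le; [nra | apply geometric_growth_pow; auto; lra]).
  assert (Hl1 : ln (rho ^ k * Y) <= ln z) by (apply ln_le; [nra | lra]).
  assert (Hl2 : ln z <= ln (rho ^ S k * Y)) by (apply ln_le; [lra | lra]).
  rewrite ln_mult, ln_pow in Hlg, Hl1, Hl2 by (try apply pow_lt; lra).
  rewrite S_INR in Hl2.
  set (u := INR k * ln rho - ln z).
  assert (Hu : Rabs u <= ln rho + Rabs (ln Y)).
  { pose proof (Rle_abs (ln Y)); pose proof (Rle_abs (- ln Y)).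
    rewrite Rabs_Ropp in *; apply Rabs_le; unfold u; lra. }
  assert (Hkc : INR k * ln c = lam * ln z + lam * u) by (unfold u, lam; field; lra).
  assert (Hlu : Rabs (lam * u) <= Rabs lam * (ln rho + Rabs (ln Y)))
    by (rewrite Rabs_mult; apply Rmult_le_compat_l; [apply Rabs_pos | exact Hu]).
  pose proof (Rle_abs (- (lam * u))); rewrite Rabs_Ropp in *; lra.
Qed.

End GeometricGrowth.

Lemma ratio_ln_eventually_lt (h : R -> R) (r K Y e : R) : 0 < e ->
  (forall y, y > Y -> h y <= r * ln y + K) ->
  exists Y', forall y, y > Y' -> h y / ln y < r + e.
Proof.
  intros He Hh; exists (Rmax Y (exp (Rabs K / e))); intros y Hy.
  assert (HyY : y > Y) by (eapply Rle_lt_trans; [apply Rmax_l | exact Hy]).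
  assert (Hly : Rabs K / e < ln y).
  { rewrite <- (ln_exp (Rabs K / e)); apply ln_increasing; [apply exp_pos |].
    eapply Rle_lt_trans; [apply Rmax_r | exact Hy]. }
  assert (HK : Rabs K < e * ln y).
  { replace (Rabs K) with (Rabs K / e * e) by (field; lra); nra. }
  pose proof (Rle_abs K); pose proof (Rabs_pos K); pose proof (Hh y HyY).
  assert (Hl0 : 0 < ln y) by nra.
  set (q := h y / ln y); assert (Hq : h y = q * ln y) by (unfold q; field; lra).
  nra.
Qed.

Lemma ratio_ln_eventually_gt (h : R -> R) (r K Y e : R) : 0 < e ->
  (forall y, y > Y -> r * ln y - K <= h y) ->
  exists Y', forall y, y > Y' -> r - e < h y / ln y.
Proof.
  intros He Hh.
  destruct (ratio_ln_eventually_lt (fun y => - h y) (- r) K Y e He) as [Y' HY'].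
  { intros y Hy; specialize (Hh y Hy); lra. }
  exists Y'; intros y Hy; specialize (HY' y Hy); cbv beta in HY'.
  unfold Rdiv in *; rewrite Ropp_mult_distr_l_reverse in HY'; lra.
Qed.

Lemma pow4_div_ge (d : R) : 0 <= d <= 1 / 4 -> 1 - 5 * d <= (1 - d) ^ 4 / (1 + d).
Proof.
  intros Hd.
  assert (H2 : 1 - 2 * d <= (1 - d) ^ 2) by nra.
  assert (H4 : 1 - 4 * d <= (1 - d) ^ 4).
  { replace ((1 - d) ^ 4) with ((1 - d) ^ 2 * (1 - d) ^ 2) by ring; nra. }
  set (q := (1 - d) ^ 4 / (1 + d)).
  assert (Hq : (1 - d) ^ 4 = q * (1 + d)) by (unfold q; field; lra).
  nra.
Qed.

Lemma slope_perturbation (s e Ln l lc : R) : 0 < e -> 0 < Ln -> 0 < l ->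
  (Rabs s + e) * l <= e / 4 * Ln -> (s - e / 4) * Ln <= lc ->
  s - e / 2 <= lc / (Ln + l).
Proof.
  intros He HLn Hl Hsmall Hlc; pose proof (Rle_abs s).
  assert (Hmul : (s - e / 2) * (Ln + l) <= lc) by nra.
  set (q := lc / (Ln + l)); assert (Hq : lc = q * (Ln + l)) by (unfold q; field; lra).
  nra.
Qed.

Lemma growth_exponent_ge (n : nat) (fn c eps e : R) :
  (2 <= n)%nat -> 0 < fn -> 0 < e -> 0 < eps ->
  (Rabs (ln fn / ln (INR n)) + e) * eps <= e / 4 * ln (INR n) ->
  exp (- (e / 4 * ln (INR n))) * fn <= c ->
  ln fn / ln (INR n) - e / 2 <= ln c / ln ((1 + eps) * INR n).
Proof.
  intros Hn Hfn He Heps Hsmall Hc.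
  assert (HnR : 2 <= INR n) by exact (le_INR 2 n Hn).
  assert (Hln : 0 < ln (INR n)) by (rewrite <- ln_1; apply ln_increasing; lra).
  assert (Hl : 0 < ln (1 + eps) < eps).
  { split; [rewrite <- ln_1; apply ln_increasing; lra |].
    rewrite <- (ln_exp eps) at 2; apply ln_increasing; [lra |].
    apply exp_ineq1; lra. }
  rewrite ln_mult, Rplus_comm by lra.
  apply slope_perturbation; try lra.
  - pose proof (Rabs_pos (ln fn / ln (INR n))); nra.
  - pose proof (exp_pos (- (e / 4 * ln (INR n)))).
    assert (Hlc : ln (exp (- (e / 4 * ln (INR n))) * fn) <= ln c)
      by (apply ln_le; [nra | exact Hc]).
    rewrite ln_mult, ln_exp in Hlc by lra.
    assert (Hs : ln fn = ln fn / ln (INR n) * ln (INR n)) by (field; lra).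
    nra.
Qed.

Lemma is_lub_approx (E : R -> Prop) (L e : R) :
  is_lub E L -> 0 < e -> exists s, E s /\ L - e < s.
Proof.
  intros [_ Hleast] He; apply NNPP; intros Hno.
  assert (L <= L - e); [| lra].
  apply Hleast; intros s Hs; apply Rnot_lt_le; eauto.
Qed.

Lemma unbounded_exists_gt (E : R -> Prop) (M : R) :
  ~ bound E -> exists s, E s /\ M < s.
Proof.
  intros Hnb; apply NNPP; intros Hno; apply Hnb.
  exists M; intros s Hs; apply Rnot_lt_le; eauto.
Qed.

Section MainArgument.
Variables (f : nat -> R) (g : R -> R).
Hypothesis hf_wsm : weakly_supermult f.
Hypothesis hg_pos : forall x, 0 < x -> 0 < g x.
Hypothesis hfg : normal_order f g.
Hypothesis hg_reg : nondecreasing_pos g \/ log_unif_cont g.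

Lemma eventually_comparable_value : exists X, forall y, y > X ->
  exists m : nat, (2 <= m)%nat /\ y <= INR m <= 2 * y /\ 0 < f m /\ g y <= 4 * f m.
Proof.
  destruct (regular_almost_nondecreasing g (1 / 2) hg_pos hg_reg ltac:(lra))
    as [e0 [He0 Hg]].
  set (eps := Rmin e0 1).
  assert (Heps : 0 < eps <= 1) by (split; [apply Rmin_glb_lt; lra | apply Rmin_r]).
  assert (Hgeps : almost_nondecreasing g (1 / 2) eps)
    by exact (almost_nondecreasing_le g _ e0 eps (Rmin_l e0 1) Hg).
  destruct (exists_good_multiplier f g hf_wsm hfg 1 eps (1 / 2)
    ltac:(lia) ltac:(lra) ltac:(lra)) as [X HX].
  exists (Rmax X 2); intros y Hy.
  assert (HyX : y > X) by (eapply Rle_lt_trans; [apply Rmax_l | exact Hy]).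
  assert (Hy2 : y > 2) by (eapply Rle_lt_trans; [apply Rmax_r | exact Hy]).
  destruct (HX y HyX) as [m [_ [Hm [_ [Hfm _]]]]].
  pose proof (hg_pos (INR m) ltac:(lra)).
  apply Rabs_def2 in Hfm.
  pose proof (Hgeps y (INR m) ltac:(lra) Hm).
  exists m; repeat split; try nra.
  apply (INR_le 2); simpl; lra.
Qed.

Lemma ratio_set_inhabited : exists s, ratio_set f s.
Proof.
  destruct eventually_comparable_value as [X HX].
  destruct (HX (X + 1) ltac:(lra)) as [m [Hm [_ [Hfm _]]]].
  exists (ln (f m) / ln (INR m)), m; auto.
Qed.

Lemma ratio_eventually_lt (r : R) : (forall s, ratio_set f s -> s <= r) ->
  forall e, 0 < e -> exists Y, forall y, y > Y -> ln (g y) / ln y < r + e.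
Proof.
  intros Hr e He; destruct eventually_comparable_value as [X HX].
  apply (ratio_ln_eventually_lt (fun y => ln (g y)) r (ln 4 + Rabs r * ln 2)
    (Rmax X 2) e He); intros y Hy.
  assert (HyX : y > X) by (eapply Rle_lt_trans; [apply Rmax_l | exact Hy]).
  assert (Hy2 : y > 2) by (eapply Rle_lt_trans; [apply Rmax_r | exact Hy]).
  destruct (HX y HyX) as [m [Hm2 [Hm [Hfm Hgy]]]].
  assert (Hlm : 0 < ln (INR m)) by (rewrite <- ln_1; apply ln_increasing; lra).
  assert (Hfr : ln (f m) <= r * ln (INR m)).
  { pose proof (Hr _ (ex_intro _ m (conj Hm2 (conj Hfm eq_refl)))) as Hs.
    set (q := ln (f m) / ln (INR m)) in Hs.
    replace (ln (f m)) with (q * ln (INR m)) by (unfold q; field; lra); nra. }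
  assert (Hgf : ln (g y) <= ln 4 + ln (f m))
    by (rewrite <- ln_mult by lra; apply ln_le; [apply hg_pos |]; lra).
  assert (Hym : ln y <= ln (INR m) <= ln 2 + ln y)
    by (split; [| rewrite <- ln_mult by lra]; apply ln_le; lra).
  pose proof (Rle_abs r); pose proof (Rabs_pos r).
  cbv beta; nra.
Qed.

(* The factor (1-d)^4/(1+d) collects the losses of the four approximations
   g(y) ~ g(m) ~ f(m) and f(nm) ~ g(nm) ~ g((1+eps)ny). *)
Lemma growth_step (n : nat) (d eps : R) :
  (1 <= n)%nat -> 0 < f n -> 0 < d < 1 -> 0 < eps <= d ->
  almost_nondecreasing g d eps ->
  exists Y, 0 < Y /\ forall y, Y <= y ->
    (1 - d) ^ 4 / (1 + d) * f n * g y <= g ((1 + eps) * INR n * y).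
Proof.
  intros Hn Hfn Hd Heps Hg.
  destruct (exists_good_multiplier f g hf_wsm hfg n eps d Hn ltac:(lra) ltac:(lra))
    as [X HX].
  exists (Rmax X 0 + 1); split; [pose proof (Rmax_r X 0); lra |]; intros y Hy.
  pose proof (Rmax_l X 0); pose proof (Rmax_r X 0).
  assert (HnR : 1 <= INR n) by exact (le_INR 1 n Hn).
  destruct (HX y ltac:(lra)) as [m [_ [Hm [Hsup [Hfm Hfnm]]]]].
  rewrite mult_INR in Hfnm.
  pose proof (Hg y (INR m) ltac:(lra) Hm) as Hgm.
  assert (Hnm : INR n * INR m <= (1 + eps) * INR n * y <= (1 + eps) * (INR n * INR m)).
  { split.
    - replace ((1 + eps) * INR n * y) with (INR n * ((1 + eps) * y)) by ring.
      apply Rmult_le_compat_l; lra.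
    - rewrite <- Rmult_assoc; apply Rmult_le_compat_l; nra. }
  pose proof (Hg (INR n * INR m) ((1 + eps) * INR n * y) ltac:(nra) Hnm) as Hgnm.
  destruct (Rabs_def2 _ _ Hfm) as [_ Hfm_lo]; destruct (Rabs_def2 _ _ Hfnm) as [Hfnm_hi _].
  pose proof (hg_pos y ltac:(lra)) as Hgy0; pose proof (hg_pos (INR m) ltac:(lra)) as Hgm0.
  pose proof (hg_pos (INR n * INR m) ltac:(nra)) as Hgnm0.
  assert (Hgy_gm : (1 - d) ^ 4 * f n * g y <= (1 - d) ^ 3 * f n * g (INR m)).
  { replace ((1 - d) ^ 4 * f n * g y) with ((1 - d) ^ 3 * f n * ((1 - d) * g y)) by ring.
    apply Rmult_le_compat_l; [pose proof (pow_lt (1 - d) 3); nra | lra]. }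
  assert (Hgm_fm : (1 - d) ^ 3 * f n * g (INR m) <= (1 - d) ^ 2 * f n * f m).
  { replace ((1 - d) ^ 3 * f n * g (INR m))
      with ((1 - d) ^ 2 * f n * ((1 - d) * g (INR m))) by ring.
    apply Rmult_le_compat_l; [pose proof (pow_lt (1 - d) 2); nra | lra]. }
  assert (Hfm_fnm : (1 - d) ^ 2 * f n * f m <= (1 - d) * f (n * m)%nat).
  { replace ((1 - d) ^ 2 * f n * f m) with ((1 - d) * ((1 - d) * f n * f m)) by ring.
    apply Rmult_le_compat_l; [lra |].
    assert (Hfm0 : 0 < f m) by nra.
    pose proof (Rmult_lt_0_compat _ _ Hfn Hfm0); nra. }
  assert (Hfnm_g : (1 - d) * f (n * m)%nat <= (1 + d) * g ((1 + eps) * INR n * y))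
    by nra.
  set (q := (1 - d) ^ 4 / (1 + d)).
  replace ((1 - d) ^ 4) with (q * (1 + d)) in Hgy_gm by (unfold q; field; lra).
  nra.
Qed.

Lemma ratio_eventually_gt (n : nat) (e : R) : (2 <= n)%nat -> 0 < f n -> 0 < e ->
  exists Y, forall y, y > Y -> ln (f n) / ln (INR n) - e < ln (g y) / ln y.
Proof.
  intros Hn Hfn He.
  assert (HnR : 2 <= INR n) by exact (le_INR 2 n Hn).
  assert (Hln : 0 < ln (INR n)) by (rewrite <- ln_1; apply ln_increasing; lra).
  set (s := ln (f n) / ln (INR n)).
  set (theta := exp (- (e / 4 * ln (INR n)))).
  assert (Htheta : 0 < theta < 1).
  { split; [apply exp_pos |]; rewrite <- exp_0; apply exp_increasing; nra. }
  set (d := (1 - theta) / 5).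
  destruct (regular_almost_nondecreasing g d hg_pos hg_reg ltac:(unfold d; lra))
    as [e0 [He0 Hg]].
  set (B := e / 4 * ln (INR n) / (Rabs s + e)).
  assert (HB : (Rabs s + e) * B = e / 4 * ln (INR n))
    by (unfold B; field; pose proof (Rabs_pos s); lra).
  set (eps := Rmin e0 (Rmin d B)).
  assert (HB0 : 0 < B)
    by (unfold B; pose proof (Rabs_pos s); apply Rdiv_lt_0_compat; nra).
  assert (Heps0 : 0 < eps) by (unfold eps; repeat apply Rmin_glb_lt; unfold d; lra).
  assert (Heps_e0 : eps <= e0) by apply Rmin_l.
  assert (Heps_d : eps <= d) by (eapply Rle_trans; [apply Rmin_r | apply Rmin_l]).
  assert (Heps_B : eps <= B) by (eapply Rle_trans; [apply Rmin_r | apply Rmin_r]).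
  assert (Hgeps : almost_nondecreasing g d eps)
    by exact (almost_nondecreasing_le g d e0 eps Heps_e0 Hg).
  destruct (growth_step n d eps ltac:(lia) Hfn ltac:(unfold d; lra)
    ltac:(lra) Hgeps) as [Y [HY Hstep]].
  set (c := (1 - d) ^ 4 / (1 + d) * f n) in Hstep.
  set (rho := (1 + eps) * INR n) in Hstep.
  assert (Hrho : 1 < rho) by (unfold rho; nra).
  assert (Hc : theta * f n <= c).
  { pose proof (pow4_div_ge d ltac:(unfold d; lra)).
    unfold c; apply Rmult_le_compat_r; [lra |]; unfold d in *; lra. }
  destruct (almost_nondecreasing_lower_bound g d eps Y rho hg_pos
    ltac:(unfold d; lra) ltac:(lra) HY Hgeps) as [a [Ha Hbase]].
  destruct (ln_ge_of_geometric_growth g rho c Y a Hrho HY Hstep Hbase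
    ltac:(nra) Ha) as [C HC].
  assert (Hslope : s - e / 2 <= ln c / ln rho).
  { pose proof (Rabs_pos s).
    apply growth_exponent_ge; fold s theta; auto; nra. }
  destruct (ratio_ln_eventually_gt (fun y => ln (g y)) (ln c / ln rho) C Y (e / 2)
    ltac:(lra)) as [Y' HY'].
  { intros y Hy; specialize (HC y ltac:(lra)); cbv beta; lra. }
  exists Y'; intros y Hy; specialize (HY' y Hy); fold s; lra.
Qed.

Lemma ratio_set_eventually_gt (s e : R) : ratio_set f s -> 0 < e ->
  exists Y, forall y, y > Y -> s - e < ln (g y) / ln y.
Proof. intros [n [Hn [Hfn ->]]]; exact (ratio_eventually_gt n e Hn Hfn). Qed.

End MainArgument.

Theorem mainTheorem3 (f : nat -> R) (g : R -> R)
  (hf_nonneg : forall n : nat, 0 <= f n)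
  (hf_wsm : weakly_supermult f)
  (hg_pos : forall x : R, 0 < x -> 0 < g x)
  (hfg : normal_order f g)
  (hg_reg : nondecreasing_pos g \/ log_unif_cont g) :
  (exists L : R, is_lub (ratio_set f) L /\
      tends_to_at_infty (fun y => ln (g y) / ln y) L)
  \/ (~ bound (ratio_set f) /\ tends_to_infty (fun y => ln (g y) / ln y)).
Proof.
  destruct (classic (bound (ratio_set f))) as [Hb | Hnb].
  - left.
    destruct (completeness _ Hb (ratio_set_inhabited f g hf_wsm hg_pos hfg hg_reg))
      as [L HL].
    exists L; split; [exact HL |]; intros e He.
    destruct (ratio_eventually_lt f g hf_wsm hg_pos hfg hg_reg L (proj1 HL) e He)
      as [Y1 HY1].
    destruct (is_lub_approx _ L (e / 2) HL ltac:(lra)) as [s [Hs HsL]].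
    destruct (ratio_set_eventually_gt f g hf_wsm hg_pos hfg hg_reg s (e / 2) Hs
      ltac:(lra)) as [Y2 HY2].
    exists (Rmax Y1 Y2); intros y Hy.
    specialize (HY1 y ltac:(eapply Rle_lt_trans; [apply Rmax_l | exact Hy])).
    specialize (HY2 y ltac:(eapply Rle_lt_trans; [apply Rmax_r | exact Hy])).
    apply Rabs_def1; lra.
  - right; split; [exact Hnb |]; intros M.
    destruct (unbounded_exists_gt _ (M + 1) Hnb) as [s [Hs HsM]].
    destruct (ratio_set_eventually_gt f g hf_wsm hg_pos hfg hg_reg s 1 Hs Rlt_0_1)
      as [Y HY].
    exists Y; intros y Hy; specialize (HY y Hy); lra.
Qed.
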